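(* For every $n\ge2$, $$\sum_{k=1}^{n-2}k^2\,f_{k,n}=\frac13(4n+1)(2n-3)!!-\frac32(2n-2)!!.$$
   Context: $\mathcal{T}_n$ is the set of fully resolved (binary) rooted trees with leaves bijectively labeled by $\{1,\dots,n\}$, and $f_{k,n}=|\{T\in\mathcal{T}_n:\varphi_T(1,2)=k\}|$, where $\varphi_T(1,2)$ is the depth (number of arcs from the root) of the lowest common ancestor of leaves $1$ and $2$. Double factorials: $(2m-1)!!=(2m-1)(2m-3)\cdots1$, $(2m)!!=(2m)(2m-2)\cdots2$, $0!!=1$; an empty sum is $0$. *)

From HB Require Import structures.
From mathcomp Require Import all_boot all_order all_algebra.
Set Implicit Arguments. Unset Strict Implicit. Unset Printing Implicit Defensive.

Inductive tree := Leaf of nat | Node of tree & tree.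

Fixpoint leaves (t : tree) : seq nat :=
  match t with Leaf a => [:: a] | Node l r => leaves l ++ leaves r end.

Definition minl (s : seq nat) : nat := foldr minn (head 0 s) s.

(* Canonical planar representative of an unordered (non-planar) tree:
   at every internal node, the smallest leaf label of the left subtree is
   smaller than that of the right subtree.  Since the leaf labels are
   distinct, every unordered leaf-labelled binary tree has exactly one such
   representative. *)
Fixpoint canon (t : tree) : bool :=
  match t with
  | Leaf _ => true
  | Node l r => [&& minl (leaves l) < minl (leaves r), canon l & canon r]
  end.

Definition in_Tn (n : nat) (t : tree) : bool :=
  perm_eq (leaves t) (iota 1 n) && canon t.

Fixpoint lca12_depth (t : tree) : nat :=
  match t with
  | Leaf _ => 0
  | Node l r =>
      if (1 \in leaves l) && (2 \in leaves l) then (lca12_depth l).+1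
      else if (1 \in leaves r) && (2 \in leaves r) then (lca12_depth r).+1
      else 0
  end.

Fixpoint trees_upto (fuel m n : nat) : seq tree :=
  match fuel with
  | 0 => [::]
  | fuel'.+1 =>
      if m == 1 then [seq Leaf a | a <- iota 1 n]
      else flatten [seq [seq Node l r | l <- trees_upto fuel' i n,
                                         r <- trees_upto fuel' (m - i) n]
                   | i <- iota 1 m.-1]
  end.

Definition trees (m n : nat) : seq tree := trees_upto m m n.

Definition f (k n : nat) : nat :=
  count (fun t => in_Tn n t && (lca12_depth t == k)) (trees n n).

Fixpoint dfact (m : nat) : nat :=
  match m with
  | 0 => 1
  | 1 => 1
  | (m'.+1 as m1).+1 => m1.+1 * dfact m'
  end.

From HB Require Import structures.
From mathcomp Require Import all_boot all_order all_algebra.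
From mathcomp Require Import ring zify.
Set Implicit Arguments. Unset Strict Implicit. Unset Printing Implicit Defensive.

(* Every tree of T_(n+1) arises from exactly one tree of T_n by grafting the
   leaf n+1 onto one of its 2n-1 edges (counting a new edge above the root);
   pruning the leaf n+1 undoes this.  The grafting lengthens the path from the
   root to the lowest common ancestor of 1 and 2 exactly when it lands on one
   of the d+1 edges of that path, d being its length.  Hence the moments
   S_j(n) = sum_(T in T_n) phi_T(1,2)^j satisfy
     S_0(n+1) = (2n-1) S_0(n),   S_1(n+1) = 2n S_1(n) + S_0(n),
     S_2(n+1) = (2n+1) S_2(n) + 3 S_1(n) + S_0(n),
   and induction from S_0(2) = 1, S_1(2) = S_2(2) = 0 gives closed forms in
   double factorials; the left-hand side of the theorem is S_2(n). *)

Fixpoint tree_eqb (a b : tree) : bool :=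
  match a, b with
  | Leaf x, Leaf y => x == y
  | Node l r, Node l' r' => tree_eqb l l' && tree_eqb r r'
  | _, _ => false
  end.

Lemma tree_eqP : Equality.axiom tree_eqb.
Proof.
elim=> [x|l IHl r IHr] [y|l' r'] /=; try by constructor.
- by apply: (iffP eqP) => [->|[]].
- by apply: (iffP andP) => [[/IHl -> /IHr ->]|[<- <-]]; split; [apply/IHl|apply/IHr].
Qed.

HB.instance Definition _ := hasDecEq.Build tree tree_eqP.

Lemma eq_NodeE l r l' r' : (Node l r == Node l' r') = (l == l') && (r == r').
Proof. by apply/eqP/andP => [[-> ->]|[/eqP -> /eqP ->]]. Qed.

Lemma size_leaves_gt0 t : 0 < size (leaves t).
Proof. by elim: t => //= l IHl r IHr; rewrite size_cat addn_gt0 IHl. Qed.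

Lemma leaves_neq0 t : leaves t != [::].
Proof. by rewrite -size_eq0 -lt0n size_leaves_gt0. Qed.

Lemma foldr_minn_le x0 s y : y \in s -> foldr minn x0 s <= y.
Proof.
elim: s => //= a s IHs; rewrite inE => /predU1P [->|/IHs]; first exact: geq_minl.
exact: leq_trans (geq_minr _ _).
Qed.

Lemma foldr_minn_mem x0 s : foldr minn x0 s \in x0 :: s.
Proof.
elim: s => [|a s IHs] /=; first exact: mem_head.
rewrite /minn; case: ifP => _; first by rewrite !inE eqxx orbT.
by move: IHs; rewrite !inE => /orP [] ->; rewrite ?orbT.
Qed.

Lemma minl1 a : minl [:: a] = a.
Proof. exact: minnn. Qed.

Lemma minl_le s y : y \in s -> minl s <= y.
Proof. by case: s => // a s; apply: foldr_minn_le. Qed.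

Lemma minl_mem s : s != [::] -> minl s \in s.
Proof.
case: s => // a s _; have := foldr_minn_mem a (a :: s).
by rewrite /minl /= inE => /predU1P [->|]; rewrite ?mem_head.
Qed.

Lemma minl_lt s x : s != [::] -> {in s, forall y, y < x} -> minl s < x.
Proof. by move=> s0 /(_ _ (minl_mem s0)). Qed.

Lemma minl_cons_gt x s : s != [::] -> {in s, forall y, y < x} ->
  minl (x :: s) = minl s.
Proof.
move=> s0 ltx; apply/eqP; rewrite eqn_leq minl_le ?inE ?minl_mem ?orbT //=.
have := minl_mem (isT : x :: s != [::]); rewrite inE => /predU1P [->|ms].
  exact/ltnW/minl_lt.
exact: minl_le.
Qed.

Lemma eq_minl s1 s2 : s1 =i s2 -> minl s1 = minl s2.
Proof.
case: s1 => [|a s1] eq12.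
  by case: s2 eq12 => // b s2 /(_ b); rewrite mem_head.
have s2n0 : s2 != [::] by apply/eqP => s20; move: (eq12 a); rewrite s20 mem_head.
apply/eqP; rewrite eqn_leq !minl_le // ?eq12 ?minl_mem //.
by rewrite -eq12 minl_mem.
Qed.

Fixpoint graft (x : nat) (t : tree) : seq tree :=
  match t with
  | Leaf a => [:: Node (Leaf a) (Leaf x)]
  | Node l r => Node (Node l r) (Leaf x) ::
      ([seq Node l' r | l' <- graft x l] ++ [seq Node l r' | r' <- graft x r])
  end.

Fixpoint prune (x : nat) (t : tree) : tree :=
  match t with
  | Leaf a => Leaf a
  | Node l r => if r == Leaf x then l else if l == Leaf x then r
                else Node (prune x l) (prune x r)
  end.

Lemma graft_neq_Leaf x t t' a : t' \in graft x t -> t' != Leaf a.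
Proof.
case: t => [b|l r] /=; first by rewrite inE => /eqP ->.
by rewrite inE mem_cat => /or3P [/eqP ->|/mapP [? _ ->]|/mapP [? _ ->]].
Qed.

Lemma perm_leaves_graft x t t' : t' \in graft x t ->
  perm_eq (leaves t') (x :: leaves t).
Proof.
elim: t t' => [a|l IHl r IHr] t' /=.
  by rewrite inE => /eqP -> /=; rewrite (perm_catC [:: a] [:: x]).
rewrite inE mem_cat => /or3P [/eqP ->|/mapP [l' Hl' ->]|/mapP [r' Hr' ->]] /=.
- by rewrite perm_catC.
- by rewrite -cat_cons perm_cat2r IHl.
- by rewrite perm_sym -cat1s perm_catCA perm_cat2l perm_sym IHr.
Qed.

Lemma mem_leaves_graft x t t' y : t' \in graft x t ->
  (y \in leaves t') = (y == x) || (y \in leaves t).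
Proof. by move=> /perm_leaves_graft /perm_mem ->; rewrite inE. Qed.

Lemma size_graft x t : size (graft x t) = (size (leaves t)).*2.-1.
Proof.
elim: t => [a|l IHl r IHr] //=.
rewrite size_cat !size_map IHl IHr size_cat.
by move: (size_leaves_gt0 l) (size_leaves_gt0 r); lia.
Qed.

Lemma graft_root x t : Node t (Leaf x) \in graft x t.
Proof. by case: t => [a|l r]; rewrite inE eqxx. Qed.

Lemma eq_Leaf_notin x t : x \notin leaves t -> (t == Leaf x) = false.
Proof. by apply: contraNF => /eqP ->; apply: mem_head. Qed.

Lemma prune_id x t : x \notin leaves t -> prune x t = t.
Proof.
elim: t => [a|l IHl r IHr] //=; rewrite mem_cat negb_or => /andP [nl nr].
by rewrite !eq_Leaf_notin // IHl ?IHr.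
Qed.

Lemma prune_graft x t t' : x \notin leaves t -> t' \in graft x t ->
  prune x t' = t.
Proof.
elim: t t' => [a|l IHl r IHr] t' /=.
  by move=> _; rewrite inE => /eqP -> /=; rewrite eqxx.
rewrite mem_cat negb_or => /andP [nl nr].
rewrite inE mem_cat => /or3P [/eqP ->|/mapP [l' Hl' ->]|/mapP [r' Hr' ->]] /=.
- by rewrite eqxx.
- by rewrite eq_Leaf_notin // (negbTE (graft_neq_Leaf _ Hl')) (IHl _ nl Hl') prune_id.
- by rewrite (negbTE (graft_neq_Leaf _ Hr')) eq_Leaf_notin // (IHr _ nr Hr') prune_id.
Qed.

Lemma uniq_graft x t : x \notin leaves t -> uniq (graft x t).
Proof.
elim: t => [a|l IHl r IHr] //=; rewrite mem_cat negb_or => /andP [nl nr].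
rewrite cat_uniq !map_inj_uniq ?IHl ?IHr //; try by move=> ? ? [].
rewrite mem_cat negb_or andbT; apply/and3P; split=> //; [apply/andP; split|].
- by apply/mapP => -[l' _ [_ /eqP]]; rewrite eq_sym eq_Leaf_notin.
- by apply/mapP => -[r' /(graft_neq_Leaf x) + [_ E]]; rewrite -E eqxx.
- apply/hasPn => _ /mapP [r' Hr' ->]; apply/mapP => -[l' _ [_ E]].
  by move: nr; rewrite -E (mem_leaves_graft _ Hr') eqxx.
Qed.

Lemma minl_graft x t t' : {in leaves t, forall y, y < x} -> t' \in graft x t ->
  minl (leaves t') = minl (leaves t).
Proof.
move=> ltx Ht'; rewrite -(minl_cons_gt (leaves_neq0 t) ltx); apply: eq_minl => y.
by rewrite (mem_leaves_graft _ Ht') inE.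
Qed.

Lemma canon_graft x t t' : {in leaves t, forall y, y < x} -> t' \in graft x t ->
  canon t' = canon t.
Proof.
elim: t t' => [a|l IHl r IHr] t' /= ltx.
  by rewrite inE => /eqP -> /=; rewrite !minl1 ltx ?mem_head.
have ltxl : {in leaves l, forall y, y < x} by move=> y yl; rewrite ltx ?mem_cat ?yl.
have ltxr : {in leaves r, forall y, y < x} by move=> y yr; rewrite ltx ?mem_cat ?yr ?orbT.
rewrite inE mem_cat => /or3P [/eqP ->|/mapP [l' Hl' ->]|/mapP [r' Hr' ->]] /=.
- by rewrite minl1 (minl_lt (leaves_neq0 (Node l r)) ltx) andbT.
- by rewrite (minl_graft ltxl Hl') (IHl _ ltxl Hl').
- by rewrite (minl_graft ltxr Hr') (IHr _ ltxr Hr').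
Qed.

Lemma graft_prune x t : uniq (leaves t) -> canon t -> x \in leaves t ->
  {in leaves t, forall y, y <= x} -> t != Leaf x -> t \in graft x (prune x t).
Proof.
elim: t => [a|l IHl r IHr] /=; first by rewrite inE => _ _ /eqP ->; rewrite eqxx.
rewrite cat_uniq mem_cat => /and3P [ul dlr ur] /and3P [lt_lr cl cr] xlr lex _.
have lexl : {in leaves l, forall y, y <= x}.
  by move=> y yl; rewrite lex ?mem_cat ?yl.
have lexr : {in leaves r, forall y, y <= x}.
  by move=> y yr; rewrite lex ?mem_cat ?yr ?orbT.
case: ifP => [/eqP ->|rx]; first exact: graft_root.
case: ifP => [/eqP lx|lx].
  by move: lt_lr; rewrite lx minl1 ltnNge lexr // minl_mem ?leaves_neq0.
case/orP: xlr => [xl|xr].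
- have nxr : x \notin leaves r by apply: contra dlr => xr; apply/hasP; exists x.
  rewrite (prune_id nxr) /= inE mem_cat.
  by apply/or3P/Or32/map_f/IHl; rewrite ?lx.
- have nxl : x \notin leaves l by apply: contra dlr => xl; apply/hasP; exists x.
  rewrite (prune_id nxl) /= inE mem_cat.
  by apply/or3P/Or33/map_f/IHr; rewrite ?rx.
Qed.

Fixpoint enum_Tn (n : nat) : seq tree :=
  if n is m.+1 then (if m is 0 then [:: Leaf 1]
                     else flatten [seq graft n t | t <- enum_Tn m])
  else [::].

Lemma in_TnP n t : in_Tn n t ->
  [/\ uniq (leaves t), size (leaves t) = n, canon t &
      forall y, (y \in leaves t) = (0 < y <= n)].
Proof.
case/andP=> p c; split => //.
- by rewrite (perm_uniq p) iota_uniq.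
- by rewrite (perm_size p) size_iota.
- by move=> y; rewrite (perm_mem p) mem_iota add1n ltnS.
Qed.

Lemma perm_iotaSr n : perm_eq (iota 1 n.+1) (n.+1 :: iota 1 n).
Proof. by rewrite -[n.+1]addn1 iotaD perm_catC add1n addn1. Qed.

Lemma sumn_map_pred1 (T : eqType) (s : seq T) a (b : bool) :
  sumn [seq (b && (t == a) : nat) | t <- s] = b * count_mem a s.
Proof.
elim: s => [|y s IHs] /=; first by rewrite muln0.
by rewrite {}IHs mulnDr; case: b; case: (y == a).
Qed.

Lemma graft_prune_max m t : in_Tn m.+2 t -> t \in graft m.+2 (prune m.+2 t).
Proof.
move=> Tm_t; have [ut st ct mt] := in_TnP Tm_t.
apply: graft_prune => //; first by rewrite mt leqnn.
- by move=> y; rewrite mt => /andP [].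
- by apply/eqP => E; move: st; rewrite E.
Qed.

Lemma in_Tn_prune m t : in_Tn m.+2 t -> in_Tn m.+1 (prune m.+2 t).
Proof.
move=> Tm_t; have grafted := graft_prune_max Tm_t.
have perm_p : perm_eq (leaves (prune m.+2 t)) (iota 1 m.+1).
  rewrite -(perm_cons m.+2) perm_sym; apply: perm_trans _ (perm_leaves_graft grafted).
  by rewrite perm_sym; apply: perm_trans _ (perm_iotaSr _); case/andP: Tm_t.
rewrite /in_Tn perm_p -(canon_graft _ grafted); first by case/andP: Tm_t.
by move=> y; rewrite (perm_mem perm_p) mem_iota add1n ltnS => /andP [].
Qed.

Lemma count_graft m t t' : in_Tn m.+1 t ->
  count_mem t' (graft m.+2 t) = in_Tn m.+2 t' && (t == prune m.+2 t').
Proof.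
move=> Tm_t; have [_ _ ct mt] := in_TnP Tm_t.
have nx : m.+2 \notin leaves t by rewrite mt ltnn andbF.
have ltx y : y \in leaves t -> y < m.+2 by rewrite mt => /andP [].
rewrite count_uniq_mem ?uniq_graft //; congr nat_of_bool; apply/idP/andP.
- move=> Ht'; rewrite (prune_graft nx Ht') /in_Tn (canon_graft ltx Ht') ct andbT.
  split=> //; apply: perm_trans (perm_leaves_graft Ht') _.
  rewrite perm_sym; apply: perm_trans (perm_iotaSr _) _.
  by rewrite perm_cons perm_sym; case/andP: Tm_t.
- by case=> Tm_t' /eqP ->; apply: graft_prune_max.
Qed.

Lemma count_enum_Tn n t : 0 < n -> count_mem t (enum_Tn n) = in_Tn n t.
Proof.
case: n => // n _; elim: n t => [|m IHm] t.
  rewrite /= /in_Tn addn0; case: t => [a|l r] /=.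
  - rewrite andbT eq_sym; congr nat_of_bool.
    apply/idP/idP => [/eqP [->] //|/perm_mem eq_a1].
    by have := eq_a1 a; rewrite !inE eqxx => /esym /eqP ->.
  - case perm_lr: perm_eq => //=; move: (perm_size perm_lr); rewrite size_cat /=.
    by move: (size_leaves_gt0 l) (size_leaves_gt0 r); lia.
rewrite [enum_Tn _]/= count_flatten -map_comp.
rewrite (eq_in_map _ (fun t' => (in_Tn m.+2 t && (t' == prune m.+2 t) : nat)) _).1.
  by rewrite sumn_map_pred1 IHm; case Tm_t: (in_Tn m.+2 t); rewrite //= in_Tn_prune.
move=> t' t'_in /=; apply: count_graft.
by move: t'_in; rewrite -has_pred1 has_count IHm lt0b.
Qed.

Definition labels_within (n : nat) (t : tree) : bool :=
  all (fun a => 0 < a <= n) (leaves t).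

Lemma count_allpairs_Node (L R : seq tree) l r :
  count_mem (Node l r) [seq Node a b | a <- L, b <- R] =
  count_mem l L * count_mem r R.
Proof.
elim: L => [|a L IHL] //=; rewrite count_cat IHL count_map mulnDl; congr (_ + _).
have [<-|neq_al] := eqVneq a l.
  by rewrite mul1n; apply: eq_count => b /=; rewrite eq_NodeE eqxx.
rewrite mul0n (eq_count (a2 := pred0)) ?count_pred0 // => b /=.
by rewrite eq_NodeE (negbTE neq_al).
Qed.

Lemma count_allpairs_Leaf (L R : seq tree) x :
  count_mem (Leaf x) [seq Node a b | a <- L, b <- R] = 0.
Proof.
elim: L => [|a L IHL] //=; rewrite count_cat IHL count_map addn0.
by rewrite (eq_count (a2 := pred0)) ?count_pred0.
Qed.

Lemma split_sizesE m s s' : 0 < s -> 0 < s' ->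
  (s' == m - s) && (s \in iota 1 m.-1) = (s + s' == m).
Proof.
by rewrite mem_iota => s_gt0 s'_gt0; case: eqP; case: eqP; rewrite s_gt0 /=; lia.
Qed.

Lemma count_trees_upto fuel m n t : 0 < m <= fuel ->
  count_mem t (trees_upto fuel m n) = (size (leaves t) == m) && labels_within n t.
Proof.
elim: fuel m t => [|fuel IHfuel] m t; first by case: m.
case/andP=> m_gt0 le_m_fuel /=; have [->|m_neq1] := eqVneq m 1.
  rewrite count_map; case: t => [a|l r] /=.
    rewrite (eq_count (a2 := pred1 a)) // count_uniq_mem ?iota_uniq //.
    by rewrite mem_iota add1n ltnS /labels_within /= andbT.
  have := size_leaves_gt0 l; have := size_leaves_gt0 r.
  rewrite size_cat (eq_count (a2 := pred0)) ?count_pred0 //; lia.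
rewrite count_flatten -map_comp; case: t => [a|l r].
  rewrite (eq_map (g := fun=> 0)) => [|i /=]; last exact: count_allpairs_Leaf.
  by rewrite /= eq_sym (negbTE m_neq1); elim: iota.
set sl := size (leaves l); set sr := size (leaves r).
set b := [&& labels_within n l, labels_within n r & sr == m - sl].
rewrite (eq_in_map _ (fun i => (b && (i == sl) : nat)) _).1.
  rewrite sumn_map_pred1 count_uniq_mem ?iota_uniq // mulnb /b /labels_within /=.
  rewrite all_cat size_cat -!andbA split_sizesE ?size_leaves_gt0 //.
  by case: (sl + sr == m); rewrite ?andbF ?andbT.
move=> i; rewrite mem_iota => /andP [le1i lt_i_m] /=.
rewrite count_allpairs_Node !IHfuel; try (apply/andP; split; lia).
rewrite /b -/sl -/sr; have [<-|_] := eqVneq sl i.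
  by case: labels_within; case: labels_within; case: (sr == m - sl).
by rewrite andbF.
Qed.

Lemma perm_trees_enum_Tn n : 0 < n ->
  perm_eq (filter (in_Tn n) (trees n n)) (enum_Tn n).
Proof.
move=> n_gt0; apply/allP => t _ /=; apply/eqP.
rewrite count_filter count_enum_Tn //; have [Tn_t|notTn_t] := boolP (in_Tn n t).
- have [_ st _ mt] := in_TnP Tn_t.
  rewrite (eq_count (a2 := pred1 t)) => [|y /=]; last by case: eqP => // ->.
  rewrite count_trees_upto ?n_gt0 ?leqnn // st eqxx; congr nat_of_bool.
  by apply/allP => y; rewrite mt.
- rewrite (eq_count (a2 := pred0)) ?count_pred0 // => y /=.
  by case: eqP => // ->; rewrite (negbTE notTn_t) andbF.
Qed.

Lemma f_enum_Tn k n : 0 < n ->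
  f k n = count (fun t => lca12_depth t == k) (enum_Tn n).
Proof.
move=> n_gt0; rewrite /f (eq_count (a2 := predI (fun t => lca12_depth t == k) (in_Tn n))).
  by rewrite -count_filter (permP (perm_trees_enum_Tn n_gt0)).
by move=> t /=; rewrite andbC.
Qed.

Definition has12 (t : tree) : bool := (1 \in leaves t) && (2 \in leaves t).

Lemma lca12_depth_Node l r : lca12_depth (Node l r) =
  if has12 l then (lca12_depth l).+1
  else if has12 r then (lca12_depth r).+1 else 0.
Proof. by []. Qed.

Lemma has12_graft x t t' : 2 < x -> t' \in graft x t -> has12 t' = has12 t.
Proof.
move=> lt2x t'_in; rewrite /has12 !(mem_leaves_graft _ t'_in).
by rewrite (ltn_eqF lt2x) (ltn_eqF (ltn_trans _ lt2x)).
Qed.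

Lemma lca12_depth_bound t : has12 t -> (lca12_depth t).+2 <= size (leaves t).
Proof.
elim: t => [a|l IHl r IHr]; first by rewrite /has12 !inE => /andP [/eqP <-].
move=> _; rewrite lca12_depth_Node /= size_cat.
have := size_leaves_gt0 l; have := size_leaves_gt0 r.
case: (boolP (has12 l)) => [/IHl|_]; first lia.
by case: (boolP (has12 r)) => [/IHr|_]; lia.
Qed.

Lemma sum_nat_const_seq (T : Type) (s : seq T) c : \sum_(i <- s) c = size s * c.
Proof. by rewrite big_const_seq count_predT iter_addn_0 mulnC. Qed.

(* The count of sum_graft_lca12_depth when 1 and 2 lie in a subtree with s
   leaves and the other subtree has s' leaves. *)
Lemma graft_weightsE d s s' a b : d.+2 <= s -> 0 < s' ->
  a + (d.+1 * a + (s.*2 - d.+2) * b + s'.*2.-1 * b) =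
  d.+2 * a + ((s + s').*2 - d.+3) * b.
Proof. nia. Qed.

Lemma lca12_depth_graftl x l r l' : 2 < x -> l' \in graft x l ->
  lca12_depth (Node l' r) =
  if has12 l then (lca12_depth l').+1 else lca12_depth (Node l r).
Proof.
by move=> lt2x l'_in; rewrite !lca12_depth_Node (has12_graft lt2x l'_in); case: (has12 l).
Qed.

Lemma lca12_depth_graftr x l r r' : 2 < x -> r' \in graft x r ->
  lca12_depth (Node l r') =
  if ~~ has12 l && has12 r then (lca12_depth r').+1 else lca12_depth (Node l r).
Proof.
move=> lt2x r'_in; rewrite !lca12_depth_Node (has12_graft lt2x r'_in).
by case: (has12 l); case: (has12 r).
Qed.

Lemma sum_graft_lca12_depth x t (g : nat -> nat) : 2 < x -> has12 t ->
  \sum_(t' <- graft x t) g (lca12_depth t') =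
  (lca12_depth t).+1 * g (lca12_depth t).+1 +
  ((size (leaves t)).*2 - (lca12_depth t).+2) * g (lca12_depth t).
Proof.
move=> lt2x; elim: t g => [a|l IHl r IHr] g.
  by rewrite /has12 !inE => /andP [/eqP <-].
(* [big_cat] leaves the monoid-law operator in place of [addn]; fold it back. *)
move=> has12t; rewrite [graft _ _]/= big_cons big_cat -[Monoid.Law.sort _]/addn !big_map.
rewrite [lca12_depth (Node (Node l r) _)]lca12_depth_Node has12t [leaves _]/= size_cat.
rewrite (eq_big_seq (fun l' =>
    g (if has12 l then (lca12_depth l').+1 else lca12_depth (Node l r)))); last first.
  by move=> l' /(lca12_depth_graftl r lt2x) ->.
rewrite [X in _ + (_ + X)](eq_big_seq (fun r' =>
    g (if ~~ has12 l && has12 r then (lca12_depth r').+1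
       else lca12_depth (Node l r)))); last first.
  by move=> r' /(lca12_depth_graftr l lt2x) ->.
have := size_leaves_gt0 l; have := size_leaves_gt0 r; rewrite lca12_depth_Node.
case: (boolP (has12 l)) => [has12l|no12l] sr_gt0 sl_gt0 /=.
  rewrite sum_nat_const_seq (IHl (fun d => g d.+1)) // size_graft.
  by rewrite graft_weightsE // lca12_depth_bound.
rewrite sum_nat_const_seq size_graft; case: (boolP (has12 r)) => [has12r|no12r].
  rewrite (IHr (fun d => g d.+1)) // (addnC ((size (leaves l)).*2.-1 * _)).
  by rewrite graft_weightsE ?lca12_depth_bound // [size _ + _]addnC.
by rewrite sum_nat_const_seq size_graft; lia.
Qed.

Definition lca12_moment (j n : nat) : nat := \sum_(t <- enum_Tn n) lca12_depth t ^ j.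

Lemma enum_Tn_has12 m t : t \in enum_Tn m.+2 -> has12 t /\ size (leaves t) = m.+2.
Proof.
rewrite -has_pred1 has_count count_enum_Tn // lt0b => /in_TnP [_ st _ mt].
by rewrite /has12 !mt.
Qed.

Lemma sum_enum_Tn_lca12_depthS m (g : nat -> nat) :
  \sum_(t <- enum_Tn m.+3) g (lca12_depth t) =
  \sum_(t <- enum_Tn m.+2) ((lca12_depth t).+1 * g (lca12_depth t).+1 +
                            ((m.+2).*2 - (lca12_depth t).+2) * g (lca12_depth t)).
Proof.
rewrite [enum_Tn _]/= big_flatten big_map; apply: eq_big_seq => t.
by case/enum_Tn_has12 => has12t st; rewrite sum_graft_lca12_depth // st.
Qed.

Lemma lca12_moment_rec m :
  [/\ lca12_moment 0 m.+3 = (2 * m + 3) * lca12_moment 0 m.+2,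
      lca12_moment 1 m.+3 = (2 * m + 4) * lca12_moment 1 m.+2 + lca12_moment 0 m.+2 &
      lca12_moment 2 m.+3 = (2 * m + 5) * lca12_moment 2 m.+2 +
                            3 * lca12_moment 1 m.+2 + lca12_moment 0 m.+2].
Proof.
rewrite /lca12_moment !big_distrr -!big_split.
rewrite !(sum_enum_Tn_lca12_depthS m (expn^~ 0), sum_enum_Tn_lca12_depthS m (expn^~ 1),
          sum_enum_Tn_lca12_depthS m (expn^~ 2)).
split; apply: eq_big_seq => t /enum_Tn_has12 [/lca12_depth_bound + st];
  rewrite st /= ?expnS ?expn0 ?muln1; nia.
Qed.

Lemma sum_sqr_indicator n d : d.+2 <= n ->
  \sum_(1 <= k < n.-1) k ^ 2 * (d == k) = d ^ 2.
Proof.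
case: d => [|d] le_d_n.
  by rewrite big1_seq // => -[|k] /andP [_]; rewrite mem_index_iota // muln0.
have d_in : d.+1 \in index_iota 1 n.-1 by rewrite mem_index_iota; lia.
rewrite (bigD1_seq _ d_in (iota_uniq _ _)) /=.
by rewrite eqxx muln1 big1 ?addn0 // => k /negbTE; rewrite eq_sym => ->; rewrite muln0.
Qed.

Lemma sum_sqr_f n : 2 <= n -> \sum_(1 <= k < n.-1) k ^ 2 * f k n = lca12_moment 2 n.
Proof.
case: n => [|[|m]] // _.
under eq_bigr => k _ do rewrite f_enum_Tn // -sumn_count sumnE big_map big_distrr.
rewrite exchange_big; apply: eq_big_seq => t /enum_Tn_has12 [has12t st].
by rewrite sum_sqr_indicator // -st lca12_depth_bound.
Qed.

Lemma dfactD2 m : dfact (m + 2) = (m + 2) * dfact m.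
Proof. by rewrite addn2. Qed.

Import GRing.Theory.
Local Open Scope ring_scope.

Lemma lca12_moment_closed m :
  [/\ (lca12_moment 0 m.+2)%:R = (dfact (2 * m + 1))%:R :> rat,
      (lca12_moment 1 m.+2)%:R =
        (dfact (2 * m + 2))%:R / 2 - (dfact (2 * m + 1))%:R :> rat &
      (lca12_moment 2 m.+2)%:R =
        (4 * m + 9)%N%:R / 3 * (dfact (2 * m + 1))%:R
        - 3 / 2 * (dfact (2 * m + 2))%:R :> rat].
Proof.
elim: m => [|m [IH0 IH1 IH2]].
  have depth0 : lca12_depth (Node (Leaf 1) (Leaf 2)) = 0%N by [].
  by rewrite /lca12_moment /= !big_seq1 depth0; split; rewrite ?natrM //; field.
have [-> -> ->] := lca12_moment_rec m.
have -> : (2 * m.+1 + 1 = 2 * m + 1 + 2)%N by lia.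
have -> : (2 * m.+1 + 2 = 2 * m + 2 + 2)%N by lia.
rewrite (dfactD2 (2 * m + 1)) (dfactD2 (2 * m + 2)) !natrD !natrM IH0 IH1 IH2.
rewrite ?natrD ?natrM.
by split; field.
Qed.

Theorem lemma12 (n : nat) : (2 <= n)%N ->
  \sum_(1 <= k < n.-1) ((k ^ 2 * f k n)%N%:R : rat)
  = 3%:R^-1 * (4 * n + 1)%N%:R * (dfact (2 * n - 3))%:R
    - 3%:R / 2%:R * (dfact (2 * n - 2))%:R.
Proof.
move=> n_ge2; rewrite -natr_sum sum_sqr_f //.
case: n n_ge2 => [|[|m]] // _; have [_ _ ->] := lca12_moment_closed m.
have -> : (2 * m.+2 - 3 = 2 * m + 1)%N by lia.
have -> : (2 * m.+2 - 2 = 2 * m + 2)%N by lia.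
by rewrite !natrD !natrM; field.
Qed.
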